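(* Let $\alpha\in\mathbb{Z}_{>0}$, $\beta\in\mathbb{R}_{>0}$, $\gamma\in\mathbb{R}$, and let $(a_n)_n$ be a sequence with asymptotic expansion \[ a_n \approx n^{\alpha n}\beta^n n^\gamma\,\tilde A(n^{-1}) \] for some nonzero formal power series $\tilde A(z)$. For $j\in\mathbb{Z}_{\geq 0}$ define the formal power series \[ \tilde A_j(z) = e^{-\alpha j}\beta^{-j} z^{\alpha j}(1-jz)^{\gamma-\alpha j}\, e^{\alpha z^{-1}(\log(1-jz)+jz)}\,\tilde A\!\left(\frac{z}{1-jz}\right). \] Then for any fixed $j\in\mathbb{Z}_{\geq 0}$, as $n\to\infty$, \[ a_{n-j} \approx n^{\alpha n}\beta^n n^\gamma\,\tilde A_j(n^{-1}). \]
   Context: For a formal power series $\tilde F(z)$, $f_n \approx b_n\tilde F(n^{-1})$ means that for every fixed $r\geq 0$, $f_n = b_n\big(\sum_{\ell=0}^{r-1}[z^\ell]\tilde F(z)\,n^{-\ell} + O(n^{-r})\big)$ as $n\to\infty$. *)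

From Stdlib Require Import Reals Lra Factorial.
Open Scope R_scope.

Definition fps := nat -> R.

Definition fps_const (c : R) : fps := fun n => if Nat.eqb n 0 then c else 0.
Definition fps_X : fps := fun n => if Nat.eqb n 1 then 1 else 0.
Definition fps_add (f g : fps) : fps := fun n => f n + g n.
Definition fps_scale (c : R) (f : fps) : fps := fun n => c * f n.
Definition fps_mul (f g : fps) : fps :=
  fun n => sum_f_R0 (fun k => f k * g (n - k)%nat) n.
Fixpoint fps_pow (f : fps) (m : nat) : fps :=
  match m with
  | O => fps_const 1
  | S m' => fps_mul f (fps_pow f m')
  end.
(* composition f(g(z)); meaningful when g 0 = 0 (then g^m has valuation >= m,
   so only m <= n contribute to the n-th coefficient) *)
Definition fps_comp (f g : fps) : fps :=
  fun n => sum_f_R0 (fun m => f m * fps_pow g m n) n.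
Definition fps_Xpow (k : nat) (f : fps) : fps :=
  fun n => if (k <=? n)%nat then f (n - k)%nat else 0.
(* f(z)/z, meaningful when f 0 = 0 *)
Definition fps_divX (f : fps) : fps := fun n => f (S n).

Definition exp_series : fps := fun m => / INR (fact m).
Definition fps_exp (g : fps) : fps := fps_comp exp_series g.

Definition log1p_series : fps :=
  fun k => match k with O => 0 | S k' => (-1) ^ k' / INR k end.
Definition fps_log1p (g : fps) : fps := fps_comp log1p_series g.

Fixpoint falling (c : R) (k : nat) : R :=
  match k with
  | O => 1
  | S k' => falling c k' * (c - INR k')
  end.
Definition gbinom (c : R) (k : nat) : R := falling c k / INR (fact k).
Definition binom_series (c : R) : fps := fun k => gbinom c k.
Definition fps_rpow1p (g : fps) (c : R) : fps := fps_comp (binom_series c) g.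

Fixpoint trunc_eval (F : fps) (x : R) (r : nat) : R :=
  match r with
  | O => 0
  | S r' => trunc_eval F x r' + F r' * x ^ r'
  end.

Definition asymp_expansion (f b : nat -> R) (F : fps) : Prop :=
  forall r : nat, exists C : R, exists N : nat, forall n : nat, (N <= n)%nat ->
    Rabs (f n - b n * trunc_eval F (/ INR n) r) <= C * Rabs (b n) * (/ INR n) ^ r.

Definition scale_seq (alpha : nat) (beta gamma : R) : nat -> R :=
  fun n => INR n ^ (alpha * n) * beta ^ n * Rpower (INR n) gamma.

(* A_j(z) = e^{-alpha j} beta^{-j} z^{alpha j} (1 - j z)^{gamma - alpha j}
            * exp( alpha z^{-1} (log(1 - j z) + j z) ) * A( z / (1 - j z) ) *)
Definition A_shift (alpha : nat) (beta gamma : R) (A : fps) (j : nat) : fps :=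
  let mjz := fps_scale (- INR j) fps_X in
  fps_scale (exp (- (INR alpha * INR j)) * / beta ^ j)
    (fps_Xpow (alpha * j)
      (fps_mul (fps_rpow1p mjz (gamma - INR alpha * INR j))
        (fps_mul
          (fps_exp (fps_scale (INR alpha)
                      (fps_divX (fps_add (fps_log1p mjz) (fps_scale (INR j) fps_X)))))
          (fps_comp A (fps_mul fps_X (fps_rpow1p mjz (-1))))))).

From Stdlib Require Import Reals Lra Lia Factorial.
Open Scope R_scope.

(* Put x = 1/n.  Then 1/(n-j) = psi(x) := x (1-jx)^{-1}, and the scale
   s(n) = n^{alpha n} beta^n n^gamma satisfies s(n-j) = s(n) Phi(x) with
     Phi(x) = e^{-alpha j} beta^{-j} x^{alpha j} (1-jx)^{gamma - alpha j}
              exp(alpha (log(1-jx) + jx) / x),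
   because (1-jx)^{alpha n} = exp(alpha n log(1-jx)).  (These are [shift_arg] and
   [shift_factor].)  The hypothesis at n-j thus reads a(n-j) = s(n) Phi(x) (T_r A(psi x) + O(x^r)),
   where T_r truncates below degree r.  Now Phi(x) T_r A(psi x) is built from exp, log(1+y),
   (1+y)^c and polynomials by sums, products, composition and division by x, and each of these
   operations preserves "has asymptotic expansion F at 0" when applied to the series; so it has
   the expansion A_j up to order r.  The expansions of exp, log(1+y) and (1+y)^c follow by
   induction on the order from the mean value theorem, their derivatives having the termwise
   derivatives of their series as expansions. *)

Fixpoint sum_lt (f : nat -> R) (k : nat) : R :=
  match k with O => 0 | S k' => sum_lt f k' + f k' end.

Lemma sum_lt_ext f g k : (forall i, (i < k)%nat -> f i = g i) -> sum_lt f k = sum_lt g k.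
Proof. induction k; simpl; intros E; auto. rewrite IHk, E; auto. Qed.

Lemma sum_lt_add f g k : sum_lt (fun i => f i + g i) k = sum_lt f k + sum_lt g k.
Proof. induction k; simpl; [ring | rewrite IHk; ring]. Qed.

Lemma sum_lt_sub f g k : sum_lt (fun i => f i - g i) k = sum_lt f k - sum_lt g k.
Proof. induction k; simpl; [ring | rewrite IHk; ring]. Qed.

Lemma sum_lt_scal c f k : c * sum_lt f k = sum_lt (fun i => c * f i) k.
Proof. induction k; simpl; [ring | rewrite <- IHk; ring]. Qed.

Lemma sum_lt_swap (a : nat -> nat -> R) m n :
  sum_lt (fun i => sum_lt (fun j => a i j) n) m = sum_lt (fun j => sum_lt (fun i => a i j) m) n.
Proof.
  induction m; simpl.
  - induction n; simpl; auto. rewrite <- IHn. ring.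
  - rewrite IHm, <- sum_lt_add. reflexivity.
Qed.

Lemma sum_lt_zero_tail f k n : (k <= n)%nat -> (forall i, (k <= i < n)%nat -> f i = 0) ->
  sum_lt f n = sum_lt f k.
Proof.
  induction 1 as [| m Hkm IH]; intros Z; auto. simpl.
  rewrite IH, Z; [ring | lia |]. intros; apply Z; lia.
Qed.

Lemma sum_f_R0_sum_lt f n : sum_f_R0 f n = sum_lt f (S n).
Proof. induction n as [| n IH]; simpl in *; [ring | rewrite IH; reflexivity]. Qed.

Lemma trunc_eval_sum_lt F x r : trunc_eval F x r = sum_lt (fun i => F i * x ^ i) r.
Proof. induction r; simpl; auto. rewrite IHr; auto. Qed.

Lemma trunc_eval_sum_f_R0 F x N : trunc_eval F x (S N) = sum_f_R0 (fun i => F i * x ^ i) N.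
Proof. rewrite trunc_eval_sum_lt, sum_f_R0_sum_lt. reflexivity. Qed.

Lemma trunc_eval_ext F G x r : (forall n, (n < r)%nat -> F n = G n) ->
  trunc_eval F x r = trunc_eval G x r.
Proof. intros E. rewrite !trunc_eval_sum_lt. apply sum_lt_ext. intros. rewrite E; auto. Qed.

Lemma trunc_eval_add F G x r : trunc_eval (fps_add F G) x r = trunc_eval F x r + trunc_eval G x r.
Proof. induction r; simpl; [ring |]. rewrite IHr. unfold fps_add. ring. Qed.

Lemma trunc_eval_scale c F x r : trunc_eval (fps_scale c F) x r = c * trunc_eval F x r.
Proof. induction r; simpl; [ring |]. rewrite IHr. unfold fps_scale. ring. Qed.

Lemma trunc_eval_at0 F r : trunc_eval F 0 (S r) = F 0%nat.
Proof. induction r; simpl in *; [ring | rewrite IHr; ring]. Qed.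

Lemma trunc_eval_divX F x r : trunc_eval F x (S r) = F 0%nat + x * trunc_eval (fps_divX F) x r.
Proof. induction r; simpl in *; [ring | rewrite IHr; unfold fps_divX; ring]. Qed.

Lemma trunc_eval_Xpow_low k F x r : (r <= k)%nat -> trunc_eval (fps_Xpow k F) x r = 0.
Proof.
  induction r; simpl; intros; auto. rewrite IHr by lia. unfold fps_Xpow.
  destruct (Nat.leb_spec k r); [lia | ring].
Qed.

Lemma trunc_eval_Xpow k F x m : trunc_eval (fps_Xpow k F) x (k + m) = x ^ k * trunc_eval F x m.
Proof.
  induction m.
  - rewrite Nat.add_0_r, trunc_eval_Xpow_low; simpl; auto; ring.
  - rewrite Nat.add_succ_r. simpl. rewrite IHm. unfold fps_Xpow.
    destruct (Nat.leb_spec k (k + m)); [| lia].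
    replace (k + m - k)%nat with m by lia. rewrite pow_add. ring.
Qed.

Section BigO.

Variable D : R -> Prop.

Definition bigO_at0 (r : nat) (h : R -> R) : Prop :=
  exists C d, 0 < d /\ forall x, Rabs x < d -> D x -> Rabs (h x) <= C * Rabs x ^ r.

Lemma bigO_at0_nonneg_const r h : bigO_at0 r h ->
  exists C d, 0 < d /\ 0 <= C /\
    forall x, Rabs x < d -> D x -> Rabs (h x) <= C * Rabs x ^ r.
Proof.
  intros [C [d [Hd H]]]. exists (Rmax C 0), d.
  split; [lra | split; [apply Rmax_r |]].
  intros x Hx Dx. eapply Rle_trans; [apply H; auto |].
  apply Rmult_le_compat_r; [apply pow_le, Rabs_pos | apply Rmax_l].
Qed.

Lemma bigO_at0_ext r h g : (forall x, h x = g x) -> bigO_at0 r h -> bigO_at0 r g.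
Proof.
  intros E [C [d [Hd H]]]. exists C, d. split; auto.
  intros x Hx Dx. rewrite <- E. auto.
Qed.

Lemma bigO_at0_zero r : bigO_at0 r (fun _ => 0).
Proof. exists 0, 1. split; [lra |]. intros. rewrite Rabs_R0. lra. Qed.

Lemma bigO_at0_pow k : bigO_at0 k (fun x => x ^ k).
Proof. exists 1, 1. split; [lra |]. intros. rewrite <- RPow_abs. lra. Qed.

Lemma bigO_at0_add r h g : bigO_at0 r h -> bigO_at0 r g -> bigO_at0 r (fun x => h x + g x).
Proof.
  intros [C1 [d1 [H1 B1]]] [C2 [d2 [H2 B2]]].
  exists (C1 + C2), (Rmin d1 d2). split; [apply Rmin_pos; auto |].
  intros x Hx Dx. pose proof (Rmin_l d1 d2); pose proof (Rmin_r d1 d2).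
  specialize (B1 x ltac:(lra) Dx). specialize (B2 x ltac:(lra) Dx).
  eapply Rle_trans; [apply Rabs_triang | lra].
Qed.

Lemma bigO_at0_scal r h c : bigO_at0 r h -> bigO_at0 r (fun x => c * h x).
Proof.
  intros Hh. destruct (bigO_at0_nonneg_const r h Hh) as [C [d [Hd [HC B]]]].
  exists (Rabs c * C), d. split; auto. intros x Hx Dx.
  rewrite Rabs_mult, Rmult_assoc. apply Rmult_le_compat_l; [apply Rabs_pos | auto].
Qed.

Lemma bigO_at0_mul r k h g :
  bigO_at0 r h -> bigO_at0 k g -> bigO_at0 (r + k) (fun x => h x * g x).
Proof.
  intros Hh Hg.
  destruct (bigO_at0_nonneg_const r h Hh) as [C1 [d1 [H1 [P1 B1]]]].
  destruct (bigO_at0_nonneg_const k g Hg) as [C2 [d2 [H2 [P2 B2]]]].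
  exists (C1 * C2), (Rmin d1 d2). split; [apply Rmin_pos; auto |].
  intros x Hx Dx. pose proof (Rmin_l d1 d2); pose proof (Rmin_r d1 d2).
  specialize (B1 x ltac:(lra) Dx). specialize (B2 x ltac:(lra) Dx).
  rewrite Rabs_mult, pow_add.
  replace (C1 * C2 * (Rabs x ^ r * Rabs x ^ k))
    with ((C1 * Rabs x ^ r) * (C2 * Rabs x ^ k)) by ring.
  apply Rmult_le_compat; auto using Rabs_pos.
Qed.

Lemma bigO_at0_mul0 r h g : bigO_at0 r h -> bigO_at0 0 g -> bigO_at0 r (fun x => h x * g x).
Proof. intros Hh Hg. rewrite <- (Nat.add_0_r r). now apply bigO_at0_mul. Qed.

Lemma Rle_pow_le1 (y : R) (k r : nat) : 0 <= y <= 1 -> (k <= r)%nat -> y ^ r <= y ^ k.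
Proof.
  intros Hy Hk. induction Hk as [| m _ IH]; [lra |]. simpl.
  pose proof (pow_le y m (proj1 Hy)). nra.
Qed.

Lemma bigO_at0_weaken r k h : (k <= r)%nat -> bigO_at0 r h -> bigO_at0 k h.
Proof.
  intros Hk Hh. destruct (bigO_at0_nonneg_const r h Hh) as [C [d [Hd [HC B]]]].
  exists C, (Rmin d 1). split; [apply Rmin_pos; lra |].
  intros x Hx Dx. pose proof (Rmin_l d 1); pose proof (Rmin_r d 1).
  eapply Rle_trans; [apply B; auto; lra |].
  apply Rmult_le_compat_l; auto.
  apply Rle_pow_le1; auto. split; [apply Rabs_pos | lra].
Qed.

Lemma bigO_at0_sum_lt r (t : nat -> R -> R) k : (forall i, (i < k)%nat -> bigO_at0 r (t i)) ->
  bigO_at0 r (fun x => sum_lt (fun i => t i x) k).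
Proof.
  induction k; simpl; intros Ht; [apply bigO_at0_zero |].
  apply bigO_at0_add; auto.
Qed.

Lemma bigO_at0_sum_f_R0 r (t : nat -> R -> R) k : (forall i, (i <= k)%nat -> bigO_at0 r (t i)) ->
  bigO_at0 r (fun x => sum_f_R0 (fun i => t i x) k).
Proof.
  intros Ht. eapply bigO_at0_ext; [intros; symmetry; apply sum_f_R0_sum_lt |].
  apply bigO_at0_sum_lt. intros; apply Ht; lia.
Qed.

Lemma bigO_at0_trunc_tail F r k : (k <= r)%nat ->
  bigO_at0 k (fun x => trunc_eval F x r - trunc_eval F x k).
Proof.
  induction 1 as [| m Hkm IH].
  - eapply bigO_at0_ext; [| apply bigO_at0_zero]. intros; simpl; ring.
  - apply (bigO_at0_ext k (fun x => (trunc_eval F x m - trunc_eval F x k) + F m * x ^ m)).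
    + intros; simpl; ring.
    + apply bigO_at0_add; [apply IH |]. apply (bigO_at0_weaken m); auto.
      apply (bigO_at0_scal m (fun x => x ^ m)), bigO_at0_pow.
Qed.

Lemma bigO_at0_trunc_eval F r : bigO_at0 0 (fun x => trunc_eval F x r).
Proof.
  eapply bigO_at0_ext; [| apply (bigO_at0_trunc_tail F r 0); lia]. intros; simpl; ring.
Qed.

End BigO.

Lemma trunc_mul_error D F G N :
  bigO_at0 D (S N) (fun x => trunc_eval F x (S N) * trunc_eval G x (S N)
                             - trunc_eval (fps_mul F G) x (S N)).
Proof.
  destruct N as [| N].
  { eapply bigO_at0_ext; [| apply bigO_at0_zero]. intros. simpl. unfold fps_mul. simpl. ring. }
  (* [cauchy_finite] writes the product of truncations as the truncated Cauchy product plus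
     the cross terms [F_i G_k x^(i+k)] with [i + k > N + 1]. *)
  set (cross k l x := F (S (l + k)) * x ^ S (l + k) * (G (S N - l)%nat * x ^ (S N - l))).
  apply (bigO_at0_ext D _
    (fun x => sum_f_R0 (fun k => sum_f_R0 (fun l => cross k l x) (pred (S N - k))) N)).
  - intros x. rewrite !trunc_eval_sum_f_R0, cauchy_finite by lia.
    replace (sum_f_R0 (fun k =>
               sum_f_R0 (fun p => F p * x ^ p * (G (k - p)%nat * x ^ (k - p))) k) (S N))
      with (sum_f_R0 (fun i => fps_mul F G i * x ^ i) (S N)).
    { unfold cross. simpl (pred (S N)). ring. }
    apply sum_eq. intros k Hk. unfold fps_mul. rewrite Rmult_comm, scal_sum.
    apply sum_eq. intros p Hp. replace (x ^ k) with (x ^ p * x ^ (k - p)); [ring |].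
    rewrite <- pow_add. f_equal. lia.
  - apply bigO_at0_sum_f_R0. intros k Hk. apply bigO_at0_sum_f_R0. intros l Hl.
    apply (bigO_at0_weaken D (S (l + k) + (S N - l))); [lia |].
    apply (bigO_at0_ext D _
      (fun x => F (S (l + k)) * G (S N - l)%nat * x ^ (S (l + k) + (S N - l)))).
    + intros x. unfold cross. rewrite pow_add. ring.
    + apply (bigO_at0_scal D _ (fun x => x ^ _)), bigO_at0_pow.
Qed.

Section Expansions.

Variable D : R -> Prop.

Definition has_expansion (f : R -> R) (F : fps) : Prop :=
  forall r, bigO_at0 D r (fun x => f x - trunc_eval F x r).

Lemma has_expansion_bounded f F : has_expansion f F -> bigO_at0 D 0 f.
Proof. intros H. eapply bigO_at0_ext; [| apply (H 0%nat)]. intros; simpl; ring. Qed.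

Lemma has_expansion_ext f g F G : (forall x, f x = g x) -> (forall n, F n = G n) ->
  has_expansion f F -> has_expansion g G.
Proof.
  intros Ef EF H r. eapply bigO_at0_ext; [| apply (H r)].
  intros. rewrite <- Ef, (trunc_eval_ext F G); auto.
Qed.

Lemma has_expansion_add f g F G : has_expansion f F -> has_expansion g G ->
  has_expansion (fun x => f x + g x) (fps_add F G).
Proof.
  intros Hf Hg r. eapply bigO_at0_ext; [| apply bigO_at0_add; [apply (Hf r) | apply (Hg r)]].
  intros; simpl. rewrite trunc_eval_add. ring.
Qed.

Lemma has_expansion_scale c f F :
  has_expansion f F -> has_expansion (fun x => c * f x) (fps_scale c F).
Proof.
  intros Hf r. eapply bigO_at0_ext; [| apply (bigO_at0_scal D r _ c (Hf r))].
  intros; simpl. rewrite trunc_eval_scale. ring.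
Qed.

Lemma has_expansion_poly F k : (forall n, (k <= n)%nat -> F n = 0) ->
  has_expansion (fun x => trunc_eval F x k) F.
Proof.
  intros HF r. destruct (Nat.le_gt_cases k r).
  - eapply bigO_at0_ext; [| apply bigO_at0_zero]. intros. rewrite !trunc_eval_sum_lt.
    rewrite (sum_lt_zero_tail _ k r); auto; [ring |]. intros. rewrite HF; [ring | lia].
  - apply bigO_at0_trunc_tail; lia.
Qed.

Lemma has_expansion_X : has_expansion (fun x => x) fps_X.
Proof.
  apply (has_expansion_ext (fun x => trunc_eval fps_X x 2) _ fps_X); auto.
  - intros; simpl; unfold fps_X; simpl; ring.
  - apply has_expansion_poly. intros. unfold fps_X. destruct (Nat.eqb_spec n 1); auto; lia.
Qed.

Lemma has_expansion_const c : has_expansion (fun _ => c) (fps_const c).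
Proof.
  apply (has_expansion_ext (fun x => trunc_eval (fps_const c) x 1) _ (fps_const c)); auto.
  - intros; simpl; unfold fps_const; simpl; ring.
  - apply has_expansion_poly. intros. unfold fps_const. destruct (Nat.eqb_spec n 0); auto; lia.
Qed.

Lemma has_expansion_Xpow k f F : has_expansion f F ->
  has_expansion (fun x => x ^ k * f x) (fps_Xpow k F).
Proof.
  intros Hf r. destruct (Nat.le_gt_cases r k).
  - apply (bigO_at0_weaken D (k + 0)); [lia |].
    eapply bigO_at0_ext;
      [| apply bigO_at0_mul; [apply bigO_at0_pow | apply (has_expansion_bounded _ _ Hf)]].
    intros. rewrite trunc_eval_Xpow_low by auto. ring.
  - replace r with (k + (r - k))%nat by lia.
    eapply bigO_at0_ext; [| apply bigO_at0_mul; [apply bigO_at0_pow | apply (Hf (r - k)%nat)]].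
    intros. rewrite trunc_eval_Xpow. ring.
Qed.

Lemma has_expansion_divX f F : (forall x, D x -> x <> 0) -> F 0%nat = 0 -> has_expansion f F ->
  has_expansion (fun x => f x / x) (fps_divX F).
Proof.
  intros HD F0 Hf r. destruct (bigO_at0_nonneg_const D _ _ (Hf (S r))) as [C [d [Hd [HC B]]]].
  exists C, d. split; auto. intros x Hx Dx. specialize (B x Hx Dx). specialize (HD x Dx).
  rewrite trunc_eval_divX, F0, Rplus_0_l in B. simpl in B.
  replace (f x / x - trunc_eval (fps_divX F) x r)
    with ((f x - x * trunc_eval (fps_divX F) x r) / x) by (field; auto).
  unfold Rdiv. rewrite Rabs_mult, Rabs_inv.
  apply Rmult_le_reg_r with (Rabs x); [apply Rabs_pos_lt; auto |].
  rewrite Rmult_assoc, Rinv_l by (apply Rabs_no_R0; auto). lra.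
Qed.

Lemma has_expansion_mul f g F G : has_expansion f F -> has_expansion g G ->
  has_expansion (fun x => f x * g x) (fps_mul F G).
Proof.
  intros Hf Hg [| r].
  - eapply bigO_at0_ext; [| apply bigO_at0_mul0;
      [apply (has_expansion_bounded _ _ Hf) | apply (has_expansion_bounded _ _ Hg)]].
    intros; simpl; ring.
  -     apply (bigO_at0_ext D _ (fun x =>
      (f x - trunc_eval F x (S r)) * g x
      + trunc_eval F x (S r) * (g x - trunc_eval G x (S r))
      + (trunc_eval F x (S r) * trunc_eval G x (S r) - trunc_eval (fps_mul F G) x (S r)))).
    + intros x. ring.
    + apply bigO_at0_add; [apply bigO_at0_add |].
      * apply bigO_at0_mul0; [apply Hf | apply (has_expansion_bounded _ _ Hg)].
      * apply (bigO_at0_mul D 0 (S r)); [apply bigO_at0_trunc_eval | apply Hg].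
      * apply trunc_mul_error.
Qed.

Lemma has_expansion_pow g G m : has_expansion g G -> has_expansion (fun x => g x ^ m) (fps_pow G m).
Proof.
  intros Hg. induction m as [| m IH].
  - exact (has_expansion_const 1).
  - apply (has_expansion_mul g (fun x => g x ^ m)); auto.
Qed.

End Expansions.

Lemma fps_pow_coef_lt G m n : G 0%nat = 0 -> (n < m)%nat -> fps_pow G m n = 0.
Proof.
  intros G0. revert n. induction m as [| m IH]; intros n Hn; [lia |].
  simpl. unfold fps_mul. apply sum_eq_R0. intros [| i] Hi.
  - rewrite G0. ring.
  - rewrite IH; [ring | lia].
Qed.

Lemma fps_comp_trunc_eval F G x r : G 0%nat = 0 ->
  sum_lt (fun m => F m * trunc_eval (fps_pow G m) x r) r = trunc_eval (fps_comp F G) x r.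
Proof.
  intros G0. rewrite trunc_eval_sum_lt.
  transitivity (sum_lt (fun m => sum_lt (fun n => F m * fps_pow G m n * x ^ n) r) r).
  { apply sum_lt_ext; intros.
    rewrite trunc_eval_sum_lt, sum_lt_scal. apply sum_lt_ext; intros; ring. }
  rewrite sum_lt_swap. apply sum_lt_ext. intros n Hn.
  unfold fps_comp. rewrite sum_f_R0_sum_lt, Rmult_comm, sum_lt_scal.
  rewrite (sum_lt_zero_tail _ (S n) r); [apply sum_lt_ext; intros; ring | lia |].
  intros. rewrite fps_pow_coef_lt by (auto; lia). ring.
Qed.

Lemma bigO_at0_comp D r h g :
  bigO_at0 (fun _ => True) r h -> bigO_at0 D 1 g -> bigO_at0 D r (fun x => h (g x)).
Proof.
  intros Hh Hg.
  destruct (bigO_at0_nonneg_const _ _ _ Hg) as [C1 [d1 [Hd1 [HC1 B1]]]].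
  destruct (bigO_at0_nonneg_const _ _ _ Hh) as [C2 [d2 [Hd2 [HC2 B2]]]].
  set (e := d2 / (C1 + 1)).
  assert (He : 0 < e) by (apply Rdiv_lt_0_compat; lra).
  assert (Ee : (C1 + 1) * e = d2) by (unfold e; field; lra).
  exists (C2 * C1 ^ r), (Rmin d1 e). split; [apply Rmin_pos; auto |]. intros x Hx Dx.
  pose proof (Rmin_l d1 e); pose proof (Rmin_r d1 e); pose proof (Rabs_pos x).
  specialize (B1 x ltac:(lra) Dx). simpl in B1. rewrite Rmult_1_r in B1.
  eapply Rle_trans; [apply B2; auto; nra |].
  rewrite Rmult_assoc, <- Rpow_mult_distr. apply Rmult_le_compat_l; auto.
  apply pow_incr. split; [apply Rabs_pos | lra].
Qed.

Lemma has_expansion_comp D f g F G : G 0%nat = 0 ->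
  has_expansion (fun _ => True) f F -> has_expansion D g G ->
  has_expansion D (fun x => f (g x)) (fps_comp F G).
Proof.
  intros G0 Hf Hg r.
  assert (Hg1 : bigO_at0 D 1 g).
  { eapply bigO_at0_ext; [| apply (Hg 1%nat)]. intros; simpl. rewrite G0. ring. }
  pose proof (bigO_at0_comp D r _ g (Hf r) Hg1) as Hf_g.
  assert (Hpow : bigO_at0 D r (fun x =>
      sum_lt (fun m => F m * (g x ^ m - trunc_eval (fps_pow G m) x r)) r)).
  { apply bigO_at0_sum_lt. intros m _. apply bigO_at0_scal, has_expansion_pow, Hg. }
  eapply bigO_at0_ext; [| apply (bigO_at0_add D r _ _ Hf_g Hpow)].
  intros x. rewrite <- (fps_comp_trunc_eval F G x r G0), trunc_eval_sum_lt.
  rewrite (sum_lt_ext (fun m => F m * (g x ^ m - trunc_eval (fps_pow G m) x r))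
                      (fun m => F m * g x ^ m - F m * trunc_eval (fps_pow G m) x r))
    by (intros; ring).
  rewrite sum_lt_sub. ring.
Qed.

Lemma bigO_at0_0_of_derivable D f l : derivable_pt_lim f 0 l -> bigO_at0 D 0 f.
Proof.
  intros Hf. destruct (Hf 1 Rlt_0_1) as [d Hd].
  exists (Rabs (f 0) + Rabs l + 1), (Rmin d 1). split; [apply Rmin_pos; [apply cond_pos | lra] |].
  intros x Hx _. pose proof (Rmin_l d 1); pose proof (Rmin_r d 1).
  simpl. rewrite Rmult_1_r. pose proof (Rabs_pos l).
  destruct (Req_dec x 0) as [-> | Hx0]; [lra |].
  specialize (Hd x Hx0 ltac:(lra)). rewrite Rplus_0_l in Hd.
  set (q := (f x - f 0) / x) in *.
  replace (f x) with (f 0 + q * x) by (unfold q; field; auto).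
  assert (Hq : Rabs q <= Rabs l + 1).
  { replace q with (l + (q - l)) by ring. eapply Rle_trans; [apply Rabs_triang | lra]. }
  eapply Rle_trans; [apply Rabs_triang |]. rewrite Rabs_mult.
  pose proof (Rabs_pos q). pose proof (Rabs_pos x). nra.
Qed.

Lemma derivable_pt_lim_trunc_eval I y r :
  derivable_pt_lim (fun y => trunc_eval I y (S r)) y
    (trunc_eval (fun k => INR (S k) * I (S k)) y r).
Proof.
  induction r as [| r IH].
  - apply (derivable_pt_lim_ext (fun _ => I 0%nat)); [intros; simpl; ring |].
    replace (trunc_eval _ y 0) with 0 by reflexivity. apply derivable_pt_lim_const.
  - apply (derivable_pt_lim_ext (fun y => trunc_eval I y (S r) + I (S r) * y ^ S r));
      [reflexivity |].
    replace (trunc_eval (fun k => INR (S k) * I (S k)) y (S r))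
      with (trunc_eval (fun k => INR (S k) * I (S k)) y r + I (S r) * (INR (S r) * y ^ pred (S r)))
      by (simpl; ring).
    apply derivable_pt_lim_plus; [apply IH | apply derivable_pt_lim_scal, derivable_pt_lim_pow].
Qed.

Lemma Rabs_le_between_0 c x : Rmin 0 x <= c <= Rmax 0 x -> Rabs c <= Rabs x.
Proof.
  unfold Rmin, Rmax. destruct (Rle_dec 0 x); intros; unfold Rabs;
    destruct (Rcase_abs c); destruct (Rcase_abs x); lra.
Qed.

Lemma trunc_error_of_derivative f h H I r rho : 0 < rho ->
  (forall y, Rabs y < rho -> derivable_pt_lim f y (h y)) ->
  I 0%nat = f 0 -> (forall k, I (S k) = H k / INR (S k)) ->
  bigO_at0 (fun _ => True) r (fun x => h x - trunc_eval H x r) ->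
  bigO_at0 (fun _ => True) (S r) (fun x => f x - trunc_eval I x (S r)).
Proof.
  intros Hrho Hd I0 IS Hh.
  destruct (bigO_at0_nonneg_const _ _ _ Hh) as [C [d [Hd0 [HC B]]]].
  exists C, (Rmin d rho). split; [apply Rmin_pos; auto |]. intros x Hx _.
  pose proof (Rmin_l d rho); pose proof (Rmin_r d rho).
  assert (Hder : forall c, Rmin 0 x <= c <= Rmax 0 x ->
    derivable_pt_lim (fun y => f y - trunc_eval I y (S r)) c (h c - trunc_eval H c r)).
  { intros c Hc. pose proof (Rabs_le_between_0 c x Hc).
    replace (trunc_eval H c r) with (trunc_eval (fun k => INR (S k) * I (S k)) c r).
    - apply derivable_pt_lim_minus; [apply Hd; lra | apply derivable_pt_lim_trunc_eval].
    - apply trunc_eval_ext. intros n _. rewrite IS. field. apply not_0_INR. lia. }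
  destruct (MVT_abs _ _ 0 x Hder) as [c [Ec Hc]]. pose proof (Rabs_le_between_0 c x Hc).
  rewrite trunc_eval_at0, I0, Rminus_0_r in Ec.
  replace (f x - trunc_eval I x (S r) - (f 0 - f 0)) with (f x - trunc_eval I x (S r)) in Ec
    by ring.
  rewrite Ec. specialize (B c ltac:(lra) Logic.I). simpl.
  assert (C * Rabs c ^ r <= C * Rabs x ^ r).
  { apply Rmult_le_compat_l; auto. apply pow_incr. split; [apply Rabs_pos | auto]. }
  pose proof (Rabs_pos x). pose proof (Rabs_pos (h c - trunc_eval H c r)). nra.
Qed.

Lemma has_expansion_exp : has_expansion (fun _ => True) exp exp_series.
Proof.
  intros r. induction r as [| r IH].
  - eapply bigO_at0_ext; [| apply (bigO_at0_0_of_derivable _ exp _ (derivable_pt_lim_exp 0))].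
    intros; simpl; ring.
  - apply (trunc_error_of_derivative exp exp exp_series exp_series r 1); auto; [lra | | |].
    + intros; apply derivable_pt_lim_exp.
    + unfold exp_series. simpl. rewrite exp_0. field.
    + intros k. unfold exp_series. change (fact (S k)) with (S k * fact k)%nat.
      rewrite mult_INR. field. split; [apply INR_fact_neq_0 | apply not_0_INR; lia].
Qed.

Definition geometric_series : fps := fun k => (-1) ^ k.

Lemma trunc_eval_geometric y r :
  (1 + y) * trunc_eval geometric_series y r = 1 - (-1) ^ r * y ^ r.
Proof.
  induction r; simpl; [ring |]. rewrite Rmult_plus_distr_l, IHr. unfold geometric_series. ring.
Qed.

Lemma has_expansion_inv1p : has_expansion (fun _ => True) (fun y => / (1 + y)) geometric_series.
Proof.
  intros r. exists 2, (1/2). split; [lra |]. intros y Hy _.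
  assert (Hy' : 1/2 < 1 + y) by (unfold Rabs in Hy; destruct (Rcase_abs y); lra).
  replace (/ (1 + y) - trunc_eval geometric_series y r) with ((-1) ^ r * y ^ r / (1 + y)).
  2: { apply Rmult_eq_reg_l with (1 + y); [| lra].
       rewrite Rmult_minus_distr_l, trunc_eval_geometric. field. lra. }
  unfold Rdiv. rewrite !Rabs_mult, pow_1_abs, Rabs_inv, <- RPow_abs, (Rabs_right (1 + y)) by lra.
  assert (/ (1 + y) <= 2).
  { apply Rmult_le_reg_l with (1 + y); [lra |]. rewrite Rinv_r; lra. }
  pose proof (pow_le (Rabs y) r (Rabs_pos y)). pose proof (Rinv_0_lt_compat (1 + y) ltac:(lra)).
  nra.
Qed.

Lemma derivable_pt_lim_comp_1p f y l :
  derivable_pt_lim f (1 + y) l -> derivable_pt_lim (fun y => f (1 + y)) y l.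
Proof.
  intros Hf eps Heps. destruct (Hf eps Heps) as [d Hd]. exists d. intros h Hh0 Hhd.
  replace (1 + (y + h)) with (1 + y + h) by ring. auto.
Qed.

Lemma derivable_pt_lim_ln1p y : -1 < y -> derivable_pt_lim (fun y => ln (1 + y)) y (/ (1 + y)).
Proof. intros. apply derivable_pt_lim_comp_1p, derivable_pt_lim_ln. lra. Qed.

Lemma has_expansion_log1p : has_expansion (fun _ => True) (fun y => ln (1 + y)) log1p_series.
Proof.
  intros [| r].
  - eapply bigO_at0_ext;
      [| apply (bigO_at0_0_of_derivable _ _ _ (derivable_pt_lim_ln1p 0 ltac:(lra)))].
    intros; simpl; ring.
  - apply (trunc_error_of_derivative _ (fun y => / (1 + y)) geometric_series _ r 1);
      [lra | | | | apply has_expansion_inv1p].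
    + intros y Hy. apply derivable_pt_lim_ln1p. unfold Rabs in Hy; destruct (Rcase_abs y); lra.
    + simpl. rewrite Rplus_0_r, ln_1. reflexivity.
    + reflexivity.
Qed.

Lemma falling_S c k : falling c (S k) = c * falling (c - 1) k.
Proof.
  induction k; simpl; [ring |]. simpl in IHk. rewrite IHk. destruct k; simpl; ring.
Qed.

Lemma derivable_pt_lim_rpow1p c y : -1 < y ->
  derivable_pt_lim (fun y => Rpower (1 + y) c) y (c * Rpower (1 + y) (c - 1)).
Proof.
  intros. apply (derivable_pt_lim_comp_1p (fun z => Rpower z c)), derivable_pt_lim_power. lra.
Qed.

Lemma has_expansion_rpow1p c :
  has_expansion (fun _ => True) (fun y => Rpower (1 + y) c) (binom_series c).
Proof.
  intros r. revert c. induction r as [| r IH]; intros c.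
  - eapply bigO_at0_ext;
      [| apply (bigO_at0_0_of_derivable _ _ _ (derivable_pt_lim_rpow1p c 0 ltac:(lra)))].
    intros; simpl; ring.
  - apply (trunc_error_of_derivative _ (fun y => c * Rpower (1 + y) (c - 1))
             (fps_scale c (binom_series (c - 1))) _ r 1); [lra | | | |].
    + intros y Hy. apply derivable_pt_lim_rpow1p. unfold Rabs in Hy; destruct (Rcase_abs y); lra.
    + unfold binom_series, gbinom, Rpower. simpl. rewrite Rplus_0_r, ln_1, Rmult_0_r, exp_0. field.
    + intros k. unfold binom_series, gbinom, fps_scale. rewrite falling_S.
      change (fact (S k)) with (S k * fact k)%nat. rewrite mult_INR.
      field. split; [apply INR_fact_neq_0 | apply not_0_INR; lia].
    + eapply bigO_at0_ext; [| apply (bigO_at0_scal _ r _ c (IH (c - 1)))].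
      intros. rewrite trunc_eval_scale. ring.
Qed.

Definition neg_jX (j : nat) : fps := fps_scale (- INR j) fps_X.

Lemma has_expansion_rpow1p_neg_jX D j c :
  has_expansion D (fun x => Rpower (1 + - INR j * x) c) (fps_rpow1p (neg_jX j) c).
Proof.
  apply (has_expansion_comp D (fun y => Rpower (1 + y) c) (fun x => - INR j * x)).
  - unfold neg_jX, fps_scale, fps_X. simpl. ring.
  - apply has_expansion_rpow1p.
  - apply (has_expansion_scale D _ (fun x => x)), has_expansion_X.
Qed.

(* [log_corr] divides by [x]; at [x = 0] Rocq's [x / 0 = 0] need not match its expansion. *)
Definition punctured (x : R) : Prop := x <> 0.

Definition log_corr (alpha j : nat) (x : R) : R :=
  INR alpha * ((ln (1 + - INR j * x) + INR j * x) / x).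

Definition log_corr_series (alpha j : nat) : fps :=
  fps_scale (INR alpha) (fps_divX (fps_add (fps_log1p (neg_jX j)) (fps_scale (INR j) fps_X))).

Lemma has_expansion_log_corr alpha j :
  has_expansion punctured (log_corr alpha j) (log_corr_series alpha j).
Proof.
  apply (has_expansion_scale _ _ (fun x => (ln (1 + - INR j * x) + INR j * x) / x)).
  apply (has_expansion_divX _ (fun x => ln (1 + - INR j * x) + INR j * x)); auto.
  - unfold fps_add, fps_log1p, fps_comp, fps_scale, fps_X. simpl. ring.
  - apply has_expansion_add.
    + apply (has_expansion_comp _ (fun y => ln (1 + y)) (fun x => - INR j * x)).
      * unfold neg_jX, fps_scale, fps_X. simpl. ring.
      * apply has_expansion_log1p.
      * apply (has_expansion_scale _ _ (fun x => x)), has_expansion_X.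
    + apply (has_expansion_scale _ _ (fun x => x)), has_expansion_X.
Qed.

Lemma log_corr_series_0 alpha j : log_corr_series alpha j 0%nat = 0.
Proof.
  unfold log_corr_series, neg_jX, fps_add, fps_log1p, fps_comp, fps_scale, fps_X, fps_divX,
    fps_mul, fps_const, log1p_series.
  simpl. unfold fps_mul, fps_const. simpl. field.
Qed.

Definition shift_arg (j : nat) (x : R) : R := x * Rpower (1 + - INR j * x) (-1).

Definition shift_arg_series (j : nat) : fps := fps_mul fps_X (fps_rpow1p (neg_jX j) (-1)).

Definition shift_const (alpha : nat) (beta : R) (j : nat) : R :=
  exp (- (INR alpha * INR j)) * / beta ^ j.

Definition shift_factor (alpha : nat) (beta gamma : R) (j : nat) (x : R) : R :=
  shift_const alpha beta j * (x ^ (alpha * j) *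
    (Rpower (1 + - INR j * x) (gamma - INR alpha * INR j) * exp (log_corr alpha j x))).

Lemma has_expansion_shift_factor_mul alpha beta gamma j (B : fps) (g : R -> R) :
  has_expansion punctured g (fps_comp B (shift_arg_series j)) ->
  has_expansion punctured (fun x => shift_factor alpha beta gamma j x * g x)
    (A_shift alpha beta gamma B j).
Proof.
  intros Hg. unfold A_shift. cbv zeta.
  eapply (has_expansion_ext _ (fun x => shift_const alpha beta j * (x ^ (alpha * j) *
    (Rpower (1 + - INR j * x) (gamma - INR alpha * INR j) * (exp (log_corr alpha j x) * g x)))));
    [intros; unfold shift_factor; ring | intros; reflexivity |].
  apply has_expansion_scale, has_expansion_Xpow.
  apply has_expansion_mul; [apply has_expansion_rpow1p_neg_jX |].
  apply has_expansion_mul; [| exact Hg].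
  apply (has_expansion_comp _ exp); [apply log_corr_series_0 | apply has_expansion_exp |].
  apply has_expansion_log_corr.
Qed.

Lemma has_expansion_comp_shift_arg j (B : fps) (f : R -> R) :
  has_expansion (fun _ => True) f B ->
  has_expansion punctured (fun x => f (shift_arg j x)) (fps_comp B (shift_arg_series j)).
Proof.
  intros Hf. apply (has_expansion_comp _ f (shift_arg j)); auto.
  - unfold shift_arg_series, fps_mul, fps_X. simpl. ring.
  - apply (has_expansion_mul _ (fun x => x));
      [apply has_expansion_X | apply has_expansion_rpow1p_neg_jX].
Qed.

Definition fps_trunc (A : fps) (r : nat) : fps := fun n => if (n <? r)%nat then A n else 0.

Definition fps_eq_below (r : nat) (F G : fps) : Prop := forall n, (n < r)%nat -> F n = G n.

Lemma fps_eq_below_trunc A r : fps_eq_below r (fps_trunc A r) A.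
Proof. intros n Hn. unfold fps_trunc. destruct (Nat.ltb_spec n r); auto; lia. Qed.

Lemma fps_eq_below_scale r c F G :
  fps_eq_below r F G -> fps_eq_below r (fps_scale c F) (fps_scale c G).
Proof. intros E n Hn. unfold fps_scale. rewrite E; auto. Qed.

Lemma fps_eq_below_Xpow r k F G :
  fps_eq_below r F G -> fps_eq_below r (fps_Xpow k F) (fps_Xpow k G).
Proof.
  intros E n Hn. unfold fps_Xpow. destruct (Nat.leb_spec k n); auto. rewrite E; auto; lia.
Qed.

Lemma fps_eq_below_mul r F G F' G' : fps_eq_below r F F' -> fps_eq_below r G G' ->
  fps_eq_below r (fps_mul F G) (fps_mul F' G').
Proof. intros E1 E2 n Hn. unfold fps_mul. apply sum_eq. intros. rewrite E1, E2; auto; lia. Qed.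

Lemma fps_eq_below_comp r F F' P : fps_eq_below r F F' ->
  fps_eq_below r (fps_comp F P) (fps_comp F' P).
Proof. intros E n Hn. unfold fps_comp. apply sum_eq. intros. rewrite E; auto; lia. Qed.

Lemma fps_eq_below_A_shift alpha beta gamma r A B j : fps_eq_below r A B ->
  fps_eq_below r (A_shift alpha beta gamma A j) (A_shift alpha beta gamma B j).
Proof.
  intros E. unfold A_shift. cbv zeta.
  apply fps_eq_below_scale, fps_eq_below_Xpow, fps_eq_below_mul; [intros n _; reflexivity |].
  apply fps_eq_below_mul; [intros n _; reflexivity |]. now apply fps_eq_below_comp.
Qed.

Lemma shift_factor_bounded alpha beta gamma j :
  bigO_at0 punctured 0 (shift_factor alpha beta gamma j).
Proof.
  apply (bigO_at0_ext _ _ (fun x => shift_factor alpha beta gamma j x * 1)); [intros; ring |].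
  eapply has_expansion_bounded, has_expansion_shift_factor_mul.
  apply (has_expansion_comp_shift_arg j _ (fun _ => 1)), has_expansion_const.
Qed.

Lemma shifted_trunc_error alpha beta gamma A j r :
  bigO_at0 punctured r (fun x => shift_factor alpha beta gamma j x * trunc_eval A (shift_arg j x) r
                                 - trunc_eval (A_shift alpha beta gamma A j) x r).
Proof.
  assert (Htrunc : has_expansion (fun _ => True) (fun y => trunc_eval A y r) (fps_trunc A r)).
  { apply (has_expansion_ext _ (fun y => trunc_eval (fps_trunc A r) y r) _ (fps_trunc A r)); auto.
    - intros. apply trunc_eval_ext, fps_eq_below_trunc.
    - apply has_expansion_poly. intros n Hn.
      unfold fps_trunc. destruct (Nat.ltb_spec n r); auto; lia. }
  eapply bigO_at0_ext;
    [| apply (has_expansion_shift_factor_mul alpha beta gamma j _ _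
                (has_expansion_comp_shift_arg j _ _ Htrunc))].
  intros x. simpl. f_equal. apply trunc_eval_ext, fps_eq_below_A_shift, fps_eq_below_trunc.
Qed.

Lemma bigO_at0_at_inv_INR r h : bigO_at0 punctured r h ->
  exists C N, forall n, (N <= n)%nat -> Rabs (h (/ INR n)) <= C * (/ INR n) ^ r.
Proof.
  intros Hh. destruct (bigO_at0_nonneg_const _ _ _ Hh) as [C [d [Hd [HC B]]]].
  destruct (INR_unbounded (/ d)) as [N HN].
  exists C, (S N). intros n Hn.
  assert (Hn0 : 0 < INR n) by (apply lt_0_INR; lia).
  assert (HNn : INR N <= INR n) by (apply le_INR; lia).
  assert (Hx : 0 < / INR n) by (apply Rinv_0_lt_compat; lra).
  rewrite <- (Rabs_right (/ INR n)) at 2 by lra.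
  apply B; [| unfold punctured; lra].
  rewrite Rabs_right by lra. rewrite <- (Rinv_inv d).
  apply Rinv_lt_contravar; [apply Rmult_lt_0_compat; [apply Rinv_0_lt_compat |]; lra | lra].
Qed.

Lemma shift_arg_inv j n : (j < n)%nat -> shift_arg j (/ INR n) = / INR (n - j).
Proof.
  intros Hjn. unfold shift_arg.
  assert (HN : 0 < INR n) by (apply lt_0_INR; lia).
  assert (HM : 0 < INR (n - j)) by (apply lt_0_INR; lia).
  rewrite minus_INR in * by lia.
  replace (1 + - INR j * / INR n) with ((INR n - INR j) / INR n) by (field; lra).
  replace (-1) with (- (1)) by ring.
  rewrite Rpower_Ropp, Rpower_1 by (apply Rdiv_lt_0_compat; lra).
  field. lra.
Qed.

Lemma inv_INR_sub_le j n : (2 * j <= n)%nat -> (j < n)%nat -> / INR (n - j) <= 2 * / INR n.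
Proof.
  intros H2 Hjn.
  assert (HN : 0 < INR n) by (apply lt_0_INR; lia).
  assert (HM : 0 < INR (n - j)) by (apply lt_0_INR; lia).
  assert (Hle : INR n <= 2 * INR (n - j)).
  { replace 2 with (INR 2) by reflexivity. rewrite <- mult_INR. apply le_INR. lia. }
  apply Rmult_le_reg_l with (INR n * INR (n - j)); [nra |].
  field_simplify; lra.
Qed.

Lemma scale_seq_exp alpha beta gamma n : (0 < n)%nat ->
  scale_seq alpha beta gamma n = exp ((INR alpha * INR n + gamma) * ln (INR n)) * beta ^ n.
Proof.
  intros Hn. assert (HN : 0 < INR n) by (apply lt_0_INR; lia).
  unfold scale_seq. rewrite <- Rpower_pow by lra. unfold Rpower.
  replace (exp ((INR alpha * INR n + gamma) * ln (INR n)))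
    with (exp (INR (alpha * n) * ln (INR n)) * exp (gamma * ln (INR n)))
    by (rewrite <- exp_plus, mult_INR; f_equal; ring).
  ring.
Qed.

Lemma shift_factor_inv alpha beta gamma j n : (j < n)%nat ->
  shift_factor alpha beta gamma j (/ INR n) =
  exp ((INR alpha * INR (n - j) + gamma) * ln (INR (n - j))
       - (INR alpha * INR n + gamma) * ln (INR n)) * / beta ^ j.
Proof.
  intros Hjn.
  assert (HN : 0 < INR n) by (apply lt_0_INR; lia).
  assert (HM : 0 < INR (n - j)) by (apply lt_0_INR; lia).
  assert (E1 : 1 + - INR j * / INR n = INR (n - j) * / INR n)
    by (rewrite minus_INR by lia; field; lra).
  assert (Eln : ln (1 + - INR j * / INR n) = ln (INR (n - j)) - ln (INR n)).
  { rewrite E1, ln_mult, ln_Rinv; try lra. apply Rinv_0_lt_compat; lra. }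
  unfold shift_factor, shift_const, log_corr.
  rewrite <- (Rpower_pow (alpha * j) (/ INR n)) by (apply Rinv_0_lt_compat; lra).
  unfold Rpower. rewrite Eln, ln_Rinv by lra.
  rewrite <- !exp_plus, (Rmult_comm (exp _ * _)), <- Rmult_assoc, <- exp_plus.
  f_equal. f_equal.
  rewrite mult_INR, minus_INR by lia. field. lra.
Qed.

Lemma scale_seq_sub alpha beta gamma j n : 0 < beta -> (j < n)%nat ->
  scale_seq alpha beta gamma (n - j) =
  scale_seq alpha beta gamma n * shift_factor alpha beta gamma j (/ INR n).
Proof.
  intros Hb Hjn. rewrite !scale_seq_exp, shift_factor_inv by lia.
  assert (Hbj : beta ^ j <> 0) by (apply pow_nonzero; lra).
  replace (beta ^ n) with (beta ^ (n - j) * beta ^ j) by (rewrite <- pow_add; f_equal; lia).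
  set (eM := (INR alpha * INR (n - j) + gamma) * ln (INR (n - j))).
  set (eN := (INR alpha * INR n + gamma) * ln (INR n)).
  replace (exp eM) with (exp eN * exp (eM - eN)) by (rewrite <- exp_plus; f_equal; ring).
  field. exact Hbj.
Qed.

Lemma asymp_expansion_nonneg_const f b F r : asymp_expansion f b F ->
  exists C N, 0 <= C /\ forall n, (N <= n)%nat ->
    Rabs (f n - b n * trunc_eval F (/ INR n) r) <= C * Rabs (b n) * (/ INR n) ^ r.
Proof.
  intros H. destruct (H r) as [C [N HC]]. exists (Rmax C 0), (S N). split; [apply Rmax_r |].
  intros n Hn. eapply Rle_trans; [apply HC; lia |].
  apply Rmult_le_compat_r; [apply pow_le, Rlt_le, Rinv_0_lt_compat, lt_0_INR; lia |].
  apply Rmult_le_compat_r; [apply Rabs_pos | apply Rmax_l].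
Qed.

Lemma shifted_remainder_bound alpha beta gamma a A j r : 0 < beta ->
  asymp_expansion a (scale_seq alpha beta gamma) A ->
  exists C N, forall n, (N <= n)%nat ->
    Rabs (a (n - j)%nat - scale_seq alpha beta gamma n * shift_factor alpha beta gamma j (/ INR n)
                          * trunc_eval A (shift_arg j (/ INR n)) r)
    <= C * Rabs (scale_seq alpha beta gamma n) * (/ INR n) ^ r.
Proof.
  intros Hbeta Ha.
  destruct (asymp_expansion_nonneg_const _ _ _ r Ha) as [C [N0 [HC Ha_r]]].
  destruct (bigO_at0_at_inv_INR _ _ (shift_factor_bounded alpha beta gamma j)) as [M [N1 HM]].
  exists (C * M * 2 ^ r), (N0 + N1 + 2 * j + 1)%nat. intros n Hn.
  specialize (HM n ltac:(lia)). simpl in HM. rewrite Rmult_1_r in HM.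
  specialize (Ha_r (n - j)%nat ltac:(lia)).
  rewrite scale_seq_sub in Ha_r by (auto; lia). rewrite shift_arg_inv by lia.
  eapply Rle_trans; [exact Ha_r |].
  assert (Hx : 0 < / INR n) by (apply Rinv_0_lt_compat, lt_0_INR; lia).
  assert (Hx' : 0 <= / INR (n - j) <= 2 * / INR n).
  { split; [apply Rlt_le, Rinv_0_lt_compat, lt_0_INR; lia | apply inv_INR_sub_le; lia]. }
  set (s := scale_seq alpha beta gamma n).
  replace (C * M * 2 ^ r * Rabs s * (/ INR n) ^ r) with (C * (Rabs s * M) * (2 * / INR n) ^ r)
    by (rewrite Rpow_mult_distr; ring).
  rewrite Rabs_mult. pose proof (Rabs_pos s).
  apply Rmult_le_compat; [| apply pow_le; lra | | apply pow_incr; lra].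
  - apply Rmult_le_pos; [| apply Rmult_le_pos]; auto using Rabs_pos.
  - apply Rmult_le_compat_l; [lra |]. apply Rmult_le_compat_l; auto.
Qed.

Theorem lemma11 (alpha : nat) (beta gamma : R) (a : nat -> R) (A : fps) :
  (0 < alpha)%nat -> 0 < beta ->
  (exists k : nat, A k <> 0) ->
  asymp_expansion a (scale_seq alpha beta gamma) A ->
  forall j : nat,
    asymp_expansion (fun n => a (n - j)%nat) (scale_seq alpha beta gamma)
      (A_shift alpha beta gamma A j).
Proof.
  intros _ Hbeta _ Ha j r.
  destruct (shifted_remainder_bound alpha beta gamma a A j r Hbeta Ha) as [C [N1 H1]].
  destruct (bigO_at0_at_inv_INR _ _ (shifted_trunc_error alpha beta gamma A j r)) as [K [N2 H2]].
  exists (C + K), (N1 + N2)%nat. intros n Hn.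
  specialize (H1 n ltac:(lia)). specialize (H2 n ltac:(lia)).
  set (s := scale_seq alpha beta gamma n) in *.
  set (P := shift_factor alpha beta gamma j (/ INR n)) in *.
  set (T := trunc_eval A (shift_arg j (/ INR n)) r) in *.
  replace (a (n - j)%nat - s * trunc_eval (A_shift alpha beta gamma A j) (/ INR n) r)
    with ((a (n - j)%nat - s * P * T)
          + s * (P * T - trunc_eval (A_shift alpha beta gamma A j) (/ INR n) r))
    by ring.
  eapply Rle_trans; [apply Rabs_triang |]. rewrite Rabs_mult.
  pose proof (Rmult_le_compat_l _ _ _ (Rabs_pos s) H2). lra.
Qed.
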